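(* In the setting described in the context, let $0<\alpha_1<1$, $\alpha_2=1-\alpha_1$, let $q_1,\dots,q_b\in\{0,1\}$ (realizations of independent Bernoulli$(p)$ random variables), $\mathbf Q=\mathrm{diag}(1-q_1,\dots,1-q_b)$, $\mathbf W=\mathrm{diag}(q_1,\dots,q_b)$, and define $\bar{\mathbf z}=(\mathbf Q+\alpha_2\mathbf W)\tilde{\mathbf z}$ and $\bar{\bm\Omega}=\mathbf Q\bm\Omega+\alpha_2\mathbf W\bm\Omega-\alpha_1\mathbf W$. Consider the randomized-damping evolution of the means of messages from indirect factor nodes to variable nodes, $\mathbf z_{\mathrm d}^{(\tau)}=\bar{\mathbf z}-\bar{\bm\Omega}\,\mathbf z_{\mathrm d}^{(\tau-1)}$ (i.e., for edges with $q_e=1$ the new mean is $\alpha_1$ times the previous mean plus $\alpha_2$ times the undamped update, and for edges with $q_e=0$ it is the undamped update). Then $\mathbf z_{\mathrm d}^{(\tau)}$ converges to a unique fixed point $\hat{\mathbf z}_{\mathrm d}$ for any initial point $\mathbf z_{\mathrm d}^{(0)}$ if and only if $\rho(\bar{\bm\Omega})<1$, and in that case $\hat{\mathbf z}_{\mathrm d}=(\mathbf I+\bm\Omega)^{-1}\tilde{\mathbf z}$, the fixed point of the undamped iteration $\mathbf z^{(\tau)}=\tilde{\mathbf z}-\bm\Omega\mathbf z^{(\tau-1)}$.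
   Context: Factor graph (DC state estimation model): variable nodes $\mathcal V=\{x_1,\dots,x_N\}$; indirect factor nodes $\mathcal F_{\mathrm{ind}}=\{f_1,\dots,f_m\}$, each $f_i$ with measurement value $z_i$, variance $v_i>0$, linear measurement function $h_i(\mathbf x)=\sum_{x_q\in\mathcal V_i}C^{(i)}_{x_q}x_q$ with nonzero coefficients, $\mathcal V_i$ the neighbours of $f_i$, $d_i=|\mathcal V_i|$. $\mathcal B$ = edges between $\mathcal V$ and $\mathcal F_{\mathrm{ind}}$, $b=|\mathcal B|$, ordered block-wise by factor node. Some variable nodes $x_q$ have a singly-connected local factor node sending a fixed Gaussian message of mean $z^{\mathrm{loc}}_{x_q}$ and variance $v^{\mathrm{loc}}_{x_q}>0$; $l_{x_q}=1/v^{\mathrm{loc}}_{x_q}$, $z_{x_q}=z^{\mathrm{loc}}_{x_q}$ if it exists, else $l_{x_q}=0$, $z_{x_q}=0$. Gaussian BP: variable-to-factor $1/v_{x_s\to f_i}=l_{x_s}+\sum_{f_a\in\mathcal F_s\setminus f_i}1/v_{f_a\to x_s}$, $z_{x_s\to f_i}=v_{x_s\to f_i}(l_{x_s}z_{x_s}+\sum_{f_a\in\mathcal F_s\setminus f_i}z_{f_a\to x_s}/v_{f_a\to x_s})$; factor-to-variable $z_{f_i\to x_s}=\frac{1}{C^{(i)}_{x_s}}(z_i-\sum_{x_b\in\mathcal V_i\setminus x_s}C^{(i)}_{x_b}z_{x_b\to f_i})$, $v_{f_i\to x_s}=\frac{1}{(C^{(i)}_{x_s})^2}(v_i+\sum_{x_b\in\mathcal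 V_i\setminus x_s}(C^{(i)}_{x_b})^2v_{x_b\to f_i})$. Edge-indexed matrices: $\mathbf C=\mathrm{diag}(C^{(i)}_{x_q})$, $\mathbf L=\mathrm{diag}(l_{x_q})$, $\mathbf z_{\mathrm a}$ with entry $z_i$ on edges of $f_i$, $\mathbf z_{\mathrm b}$ with entry $z_{x_q}$ on edge $(f_i,x_q)$, $\bm\Pi=\mathrm{blockdiag}(\mathbf 1_{d_i\times d_i}-\mathbf I_{d_i})$, $\bm\Gamma\in\{0,1\}^{b\times b}$ with zero diagonal blocks and, for edges of different factor nodes, entry $1$ iff they are incident to the same variable node. $\mathfrak D(\cdot)$ is the diagonal part of a matrix. $\hat{\mathbf v}_{\mathrm s}$ is the (unique) limit of the factor-to-variable variances, $\hat{\bm\Sigma}_{\mathrm s}=\mathrm{diag}(\hat{\mathbf v}_{\mathrm s})$, $\hat{\mathbf A}=\bm\Gamma\hat{\bm\Sigma}_{\mathrm s}^{-1}\bm\Gamma^{\mathrm T}+\mathbf L$, $\mathbf D=\mathbf C^{-1}\bm\Pi\mathbf C$, $\bm\Omega=\mathbf D(\mathfrak D(\hat{\mathbf A}))^{-1}\bm\Gamma\hat{\bm\Sigma}_{\mathrm s}^{-1}$, $\tilde{\mathbf z}=\mathbf C^{-1}\mathbf z_{\mathrm a}-\mathbf D(\mathfrak D(\hat{\mathbf A}))^{-1}\mathbf L\mathbf z_{\mathrm b}$. $\rho(\cdot)$ denotes spectral radius. *)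

From HB Require Import structures.
From mathcomp Require Import all_boot all_order all_algebra.
From mathcomp Require Import all_classical all_reals all_analysis.
From mathcomp Require Import complex.

Set Implicit Arguments.
Unset Strict Implicit.
Unset Printing Implicit Defensive.

Import Order.TTheory GRing.Theory Num.Theory.
Local Open Scope ring_scope.
Local Open Scope classical_set_scope.

(* Spectral radius of a real square matrix: the supremum (= maximum, the set
   being finite) of the moduli of its complex eigenvalues.  sup set0 = 0. *)
Definition spectral_radius (R : realType) (n : nat) (M : 'M[R]_n) : R :=
  sup [set r : R | exists2 lam : R[i],
         eigenvalue (map_mx (real_complex R) M) lam & r = ComplexField.Normc.normc lam].

Definition diagpart (R : pzRingType) (n : nat) (M : 'M[R]_n) : 'M[R]_n :=
  diag_mx (\row_i M i i).

Section FG.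
Variables (R : realType) (N m b : nat).
(* edge e = (f_(fac e), x_(var e)) *)
Variables (fac : 'I_b -> 'I_m) (var : 'I_b -> 'I_N).
Variable (C : 'I_b -> R).              (* coefficient C^{(fac e)}_{x_(var e)} *)
Variable (zmeas : 'I_m -> R).
Variables (hasloc : 'I_N -> bool) (zloc vloc : 'I_N -> R).
Variable (vhat : 'I_b -> R).           (* limit factor-to-variable variances *)

Definition lvar (q : 'I_N) : R := if hasloc q then (vloc q)^-1 else 0.
Definition zvar (q : 'I_N) : R := if hasloc q then zloc q else 0.

Definition Cmx : 'M[R]_b := diag_mx (\row_e C e).
Definition Lmx : 'M[R]_b := diag_mx (\row_e lvar (var e)).
Definition za : 'cV[R]_b := \col_e zmeas (fac e).
Definition zb : 'cV[R]_b := \col_e zvar (var e).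
Definition Pimx : 'M[R]_b := \matrix_(e, e') ((fac e == fac e') && (e != e'))%:R.
Definition Gammx : 'M[R]_b :=
  \matrix_(e, e') ((fac e != fac e') && (var e == var e'))%:R.
Definition Sigmx : 'M[R]_b := diag_mx (\row_e vhat e).
Definition Ahat : 'M[R]_b := Gammx *m invmx Sigmx *m Gammx^T + Lmx.
Definition Dmx : 'M[R]_b := invmx Cmx *m Pimx *m Cmx.
Definition Omega : 'M[R]_b :=
  Dmx *m invmx (diagpart Ahat) *m Gammx *m invmx Sigmx.
Definition ztil : 'cV[R]_b :=
  invmx Cmx *m za - Dmx *m invmx (diagpart Ahat) *m Lmx *m zb.

Variables (alpha1 : R) (qs : 'I_b -> bool).
Definition alpha2 : R := 1 - alpha1.
Definition Qmx : 'M[R]_b := diag_mx (\row_e (~~ qs e)%:R).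
Definition Wmx : 'M[R]_b := diag_mx (\row_e (qs e)%:R).
Definition zbar : 'cV[R]_b := (Qmx + alpha2 *: Wmx) *m ztil.
Definition Omegabar : 'M[R]_b :=
  Qmx *m Omega + alpha2 *: (Wmx *m Omega) - alpha1 *: Wmx.

Definition zd (z0 : 'cV[R]_b) (tau : nat) : 'cV[R]_b :=
  iter tau (fun z => zbar - Omegabar *m z) z0.

Definition damped_fixed (z : 'cV[R]_b) : Prop := z = zbar - Omegabar *m z.
End FG.

From HB Require Import structures.
From mathcomp Require Import all_boot all_order all_algebra.
From mathcomp Require Import all_classical all_reals all_analysis.
From mathcomp Require Import complex.
From mathcomp Require Import ring lra zify.
Import Order.TTheory GRing.Theory Num.Theory.
Import numFieldTopology.Exports numFieldNormedType.Exports.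
Local Open Scope classical_set_scope.
Local Open Scope ring_scope.

Set Implicit Arguments.
Unset Strict Implicit.
Unset Printing Implicit Defensive.

(* Since Q + W = 1, we have 1 + Omegabar = (Q + alpha2 W) (1 + Omega) and
   zbar = (Q + alpha2 W) ztil, so whenever 1 + Omegabar is invertible the damped
   and the undamped iterations have the same fixed point (1 + Omega)^-1 ztil.  An affine
   iteration z |-> c - M z converges from every start iff (-M)^k d -> 0 for all
   d, i.e. iff every complex eigenvalue of M has modulus < 1.  Sufficiency:
   factor the characteristic polynomial and use Cayley-Hamilton, peeling off
   one factor X - z at a time, each a contraction by |z| in the complex 1-norm.
   Necessity: follow the real and imaginary parts of an eigenvector. *)

Lemma cvg0_linear_recurrence (R : archiRealFieldType) (s t : R ^nat) (c : R) :
  0 <= c < 1 -> (forall k, 0 <= s k) -> (forall k, s k.+1 <= c * s k + t k) ->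
  t @ \oo --> 0 -> s @ \oo --> 0.
Proof.
move=> /andP[c0 c1] s0 sS /cvgr0Pnorm_lt t0; apply/cvgr0Pnorm_lt => e e0.
have c1' : 0 < 1 - c by rewrite subr_gt0.
have [K _ tK] := t0 _ (divr_gt0 (mulr_gt0 e0 c1') (@ltr0Sn R 1)).
(* once [t] is below [e (1 - c) / 2], the recurrence keeps [s] below its own
   geometrically decaying start plus [e / 2] *)
have sKj j : s (K + j)%N <= c ^+ j * s K + e / 2.
  elim: j => [|j IH]; first by rewrite expr0 mul1r addn0 lerDl ltW ?divr_gt0.
  rewrite addnS; apply: le_trans (sS _) _.
  have /ltr_normlW tKj : `|t (K + j)%N| < e * (1 - c) / 2 by apply: tK; rewrite /= leq_addr.
  have : c * s (K + j)%N <= c * (c ^+ j * s K + e / 2) by rewrite ler_wpM2l.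
  have : c * (e / 2) + e * (1 - c) / 2 = e / 2 by field.
  rewrite exprS; lra.
have cK : (fun j => c ^+ j * s K) @ \oo --> 0.
  by rewrite -(mul0r (s K)); apply: cvgMr_tmp; apply: cvg_expr; rewrite ger0_norm.
have [J _ cJ] := cvgr0_norm_lt _ cK _ (divr_gt0 e0 (@ltr0Sn R 1)).
near=> k.
have [j ->] : exists j, k = (K + (J + j))%N.
  by exists (k - K - J)%N; near: k; exists (K + J)%N => // k /= kJ; lia.
rewrite ger0_norm //; apply: le_lt_trans (sKj _) _.
have := cJ (J + j)%N (leq_addr _ _); rewrite /= ger0_norm ?mulr_ge0 ?exprn_ge0 //.
lra.
Unshelve. all: by end_near.
Qed.

Section Eigenvalues.
Variables (F : fieldType) (n : nat).
Implicit Types (A : 'M[F]_n) (a : F).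

Lemma eigenvalue_unitmx A a : eigenvalue A a = (A - a%:M \notin unitmx).
Proof. by rewrite /eigenvalue /eigenspace kermx_eq0 row_free_unit. Qed.

Lemma eigenvalue_trmx A a : eigenvalue A^T a = eigenvalue A a.
Proof. by rewrite !eigenvalue_unitmx -unitmx_tr linearB /= trmxK tr_scalar_mx. Qed.

Lemma eigenvalueN A a : eigenvalue (- A) a = eigenvalue A (- a).
Proof.
rewrite !eigenvalue_unitmx.
have -> : - A - a%:M = -1 *: (A - (- a)%:M) by rewrite scaleN1r raddfN /= opprK opprD.
by rewrite unitmxZ ?unitrN1.
Qed.

Lemma eigenvalue_col A a :
  eigenvalue A a -> exists2 w : 'cV_n, A *m w = a *: w & w != 0.
Proof.
rewrite -eigenvalue_trmx => /eigenvalueP[v vA v0]; exists v^T.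
  by apply: trmx_inj; rewrite trmx_mul !trmxK vA linearZ /= trmxK.
by rewrite -trmx0 (inj_eq trmx_inj).
Qed.

Lemma mxpow_eigen A a (w : 'cV_n) k : A *m w = a *: w -> A ^+ k *m w = a ^+ k *: w.
Proof.
move=> Aw; elim: k => [|k IH]; first by rewrite !expr0 mul1mx scale1r.
by rewrite exprS -mulmxE -mulmxA IH -scalemxAr Aw scalerA exprS mulrC.
Qed.

End Eigenvalues.

Section ComplexNorm1.
Variable R : realType.
Local Notation normc := (@ComplexField.Normc.normc R).
Local Notation rc := (real_complex R).

Lemma normc_ge0 (x : R[i]) : 0 <= normc x.
Proof. by case: x => a b; exact: sqrtr_ge0. Qed.

Lemma normc_rc (x : R) : normc (rc x) = `|x|.
Proof. by rewrite /= expr0n /= addr0 sqrtr_sqr. Qed.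

Lemma normcX (x : R[i]) k : normc (x ^+ k) = normc x ^+ k.
Proof.
elim: k => [|k IH]; first by rewrite !expr0 ComplexField.Normc.normc1.
by rewrite !exprS ComplexField.Normc.normcM IH.
Qed.

Definition cnorm1 n (v : 'cV[R[i]]_n) : R := \sum_i normc (v i 0).

Lemma cnorm1_ge0 n (v : 'cV_n) : 0 <= cnorm1 v.
Proof. by apply: sumr_ge0 => i _; exact: normc_ge0. Qed.

Lemma cnorm1D n (u v : 'cV_n) : cnorm1 (u + v) <= cnorm1 u + cnorm1 v.
Proof. by rewrite /cnorm1 -big_split; apply: ler_sum => i _; rewrite mxE le_normcD. Qed.

Lemma cnorm1Z n a (v : 'cV_n) : cnorm1 (a *: v) = normc a * cnorm1 v.
Proof.
by rewrite /cnorm1 mulr_sumr; apply: eq_bigr => i _; rewrite mxE ComplexField.Normc.normcM.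
Qed.

Lemma cnorm10 n : cnorm1 (0 : 'cV_n) = 0.
Proof. by rewrite -(scale0r 0) cnorm1Z ComplexField.Normc.normc0 mul0r. Qed.

Lemma cnorm1_eq0 n (v : 'cV_n) : cnorm1 v = 0 -> v = 0.
Proof.
move=> /eqP; rewrite psumr_eq0 => [/allP v0|i _]; last exact: normc_ge0.
apply/matrixP => i j; rewrite ord1 mxE.
by apply: ComplexField.Normc.eq0_normc; apply/eqP/v0; rewrite mem_index_enum.
Qed.

Lemma mx_norm_le_cnorm1 n (x : 'cV[R]_n) : `|x| <= cnorm1 (map_mx rc x).
Proof.
change (mx_norm x <= cnorm1 (map_mx rc x)); rewrite mx_normrE.
apply: bigmax_le => [|[i j] _ /=]; first exact: cnorm1_ge0.
rewrite (ord1 j) /cnorm1 (bigD1 i) //= mxE normc_rc lerDl.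
by apply: sumr_ge0 => k _; exact: normc_ge0.
Qed.

Lemma cnorm1_le_mx_norm n (x : 'cV[R]_n) : cnorm1 (map_mx rc x) <= n%:R * `|x|.
Proof.
rewrite /cnorm1 mulr_natl -[n in _ *+ n]card_ord -sumr_const; apply: ler_sum => i _.
rewrite mxE normc_rc; change (`|x i 0| <= mx_norm x); rewrite mx_normrE.
exact: (le_bigmax _ (fun ij : 'I_n * 'I_1 => `|x ij.1 ij.2|) (i, 0)).
Qed.

Lemma cvg0_cnorm1P n (u : nat -> 'cV[R]_n) :
  u @ \oo --> (0 : 'cV[R]_n) <-> (fun k => cnorm1 (map_mx rc (u k))) @ \oo --> 0.
Proof.
split=> [/norm_cvg0P u0 | c0].
  apply: (@squeeze_cvgr _ _ _ _ (fun=> 0) (fun k => n%:R * `|u k|)).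
  - by near=> k; rewrite cnorm1_ge0 cnorm1_le_mx_norm.
  - exact: cvg_cst.
  - by rewrite -(mulr0 n%:R); apply: cvgMl_tmp.
apply/norm_cvg0P; apply: (@squeeze_cvgr _ _ _ _ (fun=> 0) _ (fun k => `|u k|) _ _ _ c0).
- by near=> k; rewrite normr_ge0 mx_norm_le_cnorm1.
- exact: cvg_cst.
Unshelve. all: by end_near.
Qed.

Lemma cnorm1_mxpow_cvg0_prod n (B : 'M[R[i]]_n.+1) (s : seq R[i]) :
  all (fun z => normc z < 1) s ->
  forall y, horner_mx B (\prod_(z <- s) ('X - z%:P)) *m y = 0 ->
  (fun k => cnorm1 (B ^+ k *m y)) @ \oo --> 0.
Proof.
elim: s => [|z s IH] /=.
  move=> _ y; rewrite big_nil rmorph1 mul1mx => ->.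
  under eq_fun do rewrite mulmx0 cnorm10.
  exact: cvg_cst.
move=> /andP[z1 s1] y; rewrite big_cons => Py.
pose w := (B - z%:M) *m y.
have Pw : horner_mx B (\prod_(z <- s) ('X - z%:P)) *m w = 0.
  by rewrite /w mulmxA -Py mulrC rmorphM /= rmorphB /= horner_mx_X horner_mx_C mulmxE.
apply: (cvg0_linear_recurrence (c := normc z) _ _ _ (IH s1 w Pw)) => [|k|k].
- by rewrite normc_ge0.
- exact: cnorm1_ge0.
have -> : B ^+ k.+1 *m y = z *: (B ^+ k *m y) + B ^+ k *m w.
  rewrite /w mulmxA mulmxBr mulmxBl mul_mx_scalar -scalemxAl addrC subrK.
  by rewrite exprSr -mulmxE.
by rewrite -cnorm1Z cnorm1D.
Qed.

Lemma cnorm1_mxpow_cvg0 n (B : 'M[R[i]]_n.+1) :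
  (forall l, eigenvalue B l -> normc l < 1) ->
  forall y, (fun k => cnorm1 (B ^+ k *m y)) @ \oo --> 0.
Proof.
move=> B1 y; have [r charE] := closed_field_poly_normal (char_poly B).
rewrite (monicP (char_poly_monic B)) scale1r in charE.
apply: (@cnorm1_mxpow_cvg0_prod _ B r).
  by apply/allP => z zr; apply: B1; rewrite eigenvalue_root_char charE root_prod_XsubC.
by rewrite -charE Cayley_Hamilton mul0mx.
Qed.

End ComplexNorm1.

Section RealMatrixPowers.
Variable R : realType.
Local Notation normc := (@ComplexField.Normc.normc R).
Local Notation rc := (real_complex R).

Lemma spectral_radius_lt1P n (M : 'M[R]_n) :
  spectral_radius M < 1 <-> forall l, eigenvalue (map_mx rc M) l -> normc l < 1.
Proof.
have [r charE] := closed_field_poly_normal (char_poly (map_mx rc M)).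
rewrite (monicP (char_poly_monic _)) scale1r in charE.
have eigE l : eigenvalue (map_mx rc M) l = (l \in r).
  by rewrite eigenvalue_root_char charE root_prod_XsubC.
rewrite /spectral_radius.
set E := [set x | _].
(* the sup is over the finitely many roots [r] of the characteristic polynomial *)
have Emax : ubound E (\big[Num.max/0]_(z <- r) normc z).
  by move=> _ [l El ->]; apply: le_bigmax_seq; rewrite // -eigE.
split=> [E1 l El | E1].
  apply: le_lt_trans E1; apply: ub_le_sup; last by exists l.
  by exists (\big[Num.max/0]_(z <- r) normc z).
have [->|/set0P E0] := eqVneq E set0; first by rewrite sup0.
apply: le_lt_trans (ge_sup E0 Emax) _.
by rewrite big_seq; apply: bigmax_lt => // z zr; apply: E1; rewrite eigE.
Qed.

Lemma mxpow_cvg0 n (A : 'M[R]_n) :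
  (forall l, eigenvalue (map_mx rc A) l -> normc l < 1) ->
  forall d : 'cV_n, (fun k => A ^+ k *m d) @ \oo --> (0 : 'cV_n).
Proof.
case: n A => [|n] A A1 d.
  by under eq_fun do rewrite [_ *m d]flatmx0; exact: cvg_cst.
apply/cvg0_cnorm1P.
under eq_fun do rewrite map_mxM rmorphXn.
exact: cnorm1_mxpow_cvg0.
Qed.

Lemma eigenvalue_lt1_mxpow_cvg0 n (A : 'M[R]_n) :
  (forall d : 'cV_n, (fun k => A ^+ k *m d) @ \oo --> (0 : 'cV_n)) ->
  forall l, eigenvalue (map_mx rc A) l -> normc l < 1.
Proof.
move=> A0 l /eigenvalue_col[w Aw w0].
pose a := map_mx (@complex.Re R) w; pose b := map_mx (@complex.Im R) w.
have wE : w = map_mx rc a + 'i%C *: map_mx rc b.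
  by apply/matrixP => i j; rewrite !mxE; exact: complexE.
have lw_le k : normc l ^+ k * cnorm1 w <=
    cnorm1 (map_mx rc (A ^+ k *m a)) + cnorm1 (map_mx rc (A ^+ k *m b)).
  rewrite -normcX -cnorm1Z -(mxpow_eigen k Aw) {1}wE mulmxDr -scalemxAr.
  apply: le_trans (cnorm1D _ _) _; rewrite cnorm1Z !map_mxM rmorphXn.
  by rewrite [normc _]/= expr0n expr1n add0r sqrtr1 mul1r.
have lw0 : (fun k => normc l ^+ k * cnorm1 w) @ \oo --> 0.
  apply: (@squeeze_cvgr _ _ _ _ (fun=> 0) (fun k =>
    cnorm1 (map_mx rc (A ^+ k *m a)) + cnorm1 (map_mx rc (A ^+ k *m b)))).
  - by near=> k; rewrite mulr_ge0 ?exprn_ge0 ?normc_ge0 ?cnorm1_ge0 ?lw_le.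
  - exact: cvg_cst.
  - by rewrite -(addr0 0); apply: cvgD; apply/cvg0_cnorm1P.
rewrite ltNge; apply/negP => l1.
have w_gt0 : 0 < cnorm1 w.
  by rewrite lt_neqAle cnorm1_ge0 andbT eq_sym; apply: contra w0 => /eqP/cnorm1_eq0->.
have [K _ lwK] := cvgr0_norm_lt _ lw0 _ w_gt0.
have := lwK K (leqnn K); rewrite /= ger0_norm ?mulr_ge0 ?exprn_ge0 ?normc_ge0 ?cnorm1_ge0 //.
by apply/negP; rewrite -leNgt ler_peMl ?cnorm1_ge0 ?exprn_ege1.
Unshelve. all: by end_near.
Qed.

Lemma mxpowN_cvg0P n (M : 'M[R]_n) : spectral_radius M < 1 <->
  forall d : 'cV_n, (fun k => (- M) ^+ k *m d) @ \oo --> (0 : 'cV_n).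
Proof.
rewrite spectral_radius_lt1P; split=> [M1 | M0 l Ml].
  by apply: mxpow_cvg0 => l; rewrite map_mxN eigenvalueN -normcN; apply: M1.
rewrite -normcN; apply: eigenvalue_lt1_mxpow_cvg0 M0 _ _.
by rewrite map_mxN eigenvalueN opprK.
Qed.

End RealMatrixPowers.

Section AffineIteration.
Variables (R : realType) (n : nat) (M : 'M[R]_n) (c : 'cV[R]_n).

Local Notation step := (fun z => c - M *m z).

Lemma iter_affine_fixed zh z0 k : zh = step zh ->
  iter k step z0 = zh + (- M) ^+ k *m (z0 - zh).
Proof.
move=> zhE; elim: k => [|k IH] /=; first by rewrite expr0 mul1mx addrC subrK.
by rewrite IH mulmxDr opprD addrA -zhE exprS -mulmxE !mulNmx -mulmxA.
Qed.

Lemma unitmx1D_spectral_radius : spectral_radius M < 1 -> 1 + M \in unitmx.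
Proof.
move=> /spectral_radius_lt1P M1; apply: contraT => M1n.
have : eigenvalue (map_mx (real_complex R) M) (real_complex R (-1)).
  by rewrite eigenvalue_map eigenvalue_unitmx raddfN /= opprK addrC.
by move/M1; rewrite normc_rc normrN normr1 ltxx.
Qed.

Lemma affine_fixedP z : 1 + M \in unitmx -> z = step z <-> z = invmx (1 + M) *m c.
Proof.
move=> M1; split=> [zE | ->].
  have : (1 + M) *m z = c by rewrite mulmxDl mul1mx {1}zE subrK.
  by move<-; rewrite mulKmx.
have zc : (1 + M) *m (invmx (1 + M) *m c) = c by rewrite mulKVmx.
by rewrite -{2}zc mulmxDl mul1mx addrK.
Qed.

Lemma affine_iter_cvg : spectral_radius M < 1 ->
  forall z0, (fun k => iter k step z0) @ \oo --> invmx (1 + M) *m c.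
Proof.
move=> M1 z0; set zh := invmx (1 + M) *m c.
have zhE := (affine_fixedP zh (unitmx1D_spectral_radius M1)).2 erefl.
have -> : (fun k => iter k step z0) = (fun k => zh + (- M) ^+ k *m (z0 - zh)).
  by apply/funext => k; exact: iter_affine_fixed.
rewrite -[X in _ --> X]addr0; apply: cvgD; first exact: cvg_cst.
exact: (mxpowN_cvg0P M).1.
Qed.

Lemma affine_iter_cvgP :
  (exists zh, [/\ zh = step zh, (forall z, z = step z -> z = zh)
     & forall z0, (fun k => iter k step z0) @ \oo --> zh])
  <-> spectral_radius M < 1.
Proof.
split=> [[zh [zhE _ zh_lim]] | M1].
  apply/mxpowN_cvg0P => d.
  have -> : (fun k => (- M) ^+ k *m d) = (fun k => iter k step (zh + d) - zh).
    by apply/funext => k; rewrite (iter_affine_fixed _ _ zhE) [zh + d]addrC addrK addrC addKr.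
  by rewrite -(subrr zh); apply: cvgB => //; exact: cvg_cst.
have M1u := unitmx1D_spectral_radius M1.
exists (invmx (1 + M) *m c); split.
- exact/(affine_fixedP _ M1u).
- by move=> z /(affine_fixedP _ M1u).
- exact: affine_iter_cvg.
Qed.

End AffineIteration.

Section RandomizedDamping.
Variables (R : realType) (N m b : nat) (fac : 'I_b -> 'I_m) (var : 'I_b -> 'I_N).
Variables (C : 'I_b -> R) (hasloc : 'I_N -> bool) (vloc : 'I_N -> R) (vhat : 'I_b -> R).
Variables (alpha1 : R) (qs : 'I_b -> bool).

Lemma Qmx_add_Wmx : Qmx R qs + Wmx R qs = 1.
Proof.
apply/matrixP => i j; rewrite !mxE.
by case: (i == j); case: (qs i); rewrite ?mulr1n ?mulr0n ?addr0 ?add0r.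
Qed.

Lemma Omegabar_1D : 1 + Omegabar fac var C hasloc vloc vhat alpha1 qs =
  (Qmx R qs + alpha2 alpha1 *: Wmx R qs) *m (1 + Omega fac var C hasloc vloc vhat).
Proof.
rewrite mulmxDr mulmx1 mulmxDl -scalemxAl /Omegabar -{1}Qmx_add_Wmx.
set Q := Qmx R qs; set W := Wmx R qs; set O := Omega _ _ _ _ _ _.
have -> : alpha2 alpha1 *: W = W - alpha1 *: W by rewrite /alpha2 scalerBl scale1r.
by rewrite addrA (addrA Q) addrAC.
Qed.

Variables (zmeas : 'I_m -> R) (zloc : 'I_N -> R).
Local Notation Om := (Omega fac var C hasloc vloc vhat).
Local Notation Ombar := (Omegabar fac var C hasloc vloc vhat alpha1 qs).
Local Notation zt := (ztil fac var C zmeas hasloc zloc vloc vhat).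
Local Notation zb := (zbar fac var C zmeas hasloc zloc vloc vhat alpha1 qs).

Lemma unitmx1D_Omega : 1 + Ombar \in unitmx -> 1 + Om \in unitmx.
Proof. by rewrite Omegabar_1D unitmx_mul => /andP[]. Qed.

Lemma damped_fixed_point : 1 + Ombar \in unitmx ->
  invmx (1 + Ombar) *m zb = invmx (1 + Om) *m zt.
Proof.
move=> Ombar1; have Om1 := unitmx1D_Omega Ombar1.
apply: (can_inj (mulKmx Ombar1)); rewrite mulKVmx // Omegabar_1D -mulmxA.
by rewrite mulKVmx.
Qed.

End RandomizedDamping.

Theorem theorem3p2p4 (R : realType) (N m b : nat)
  (fac : 'I_b -> 'I_m) (var : 'I_b -> 'I_N)
  (C : 'I_b -> R) (zmeas vmeas : 'I_m -> R)
  (hasloc : 'I_N -> bool) (zloc vloc : 'I_N -> R) (vhat : 'I_b -> R)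
  (alpha1 : R) (qs : 'I_b -> bool) :
  injective (fun e => (fac e, var e)) ->
  (forall e, C e != 0) ->
  (forall i, 0 < vmeas i) ->
  (forall q, hasloc q -> 0 < vloc q) ->
  (forall e, 0 < vhat e) ->
  diagpart (Ahat fac var hasloc vloc vhat) \in unitmx ->
  0 < alpha1 < 1 ->
  let Om := Omega fac var C hasloc vloc vhat in
  let zt := ztil fac var C zmeas hasloc zloc vloc vhat in
  let Ombar := Omegabar fac var C hasloc vloc vhat alpha1 qs in
  let it := zd fac var C zmeas hasloc zloc vloc vhat alpha1 qs in
  let fixd := damped_fixed fac var C zmeas hasloc zloc vloc vhat alpha1 qs in
  ((exists zhat : 'cV[R]_b,
       [/\ fixd zhat, (forall z, fixd z -> z = zhat)
         & forall z0 : 'cV[R]_b, it z0 @ \oo --> zhat])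
   <-> spectral_radius Ombar < 1)
  /\ (spectral_radius Ombar < 1 ->
      [/\ 1 + Om \in unitmx,
          invmx (1 + Om) *m zt = zt - Om *m (invmx (1 + Om) *m zt)
        & forall z0 : 'cV[R]_b, it z0 @ \oo --> invmx (1 + Om) *m zt]).
Proof.
move=> _ _ _ _ _ _ _ Om zt Ombar it fixd.
split; first exact: affine_iter_cvgP.
move=> Ombar_lt1; have Ombar1 := unitmx1D_spectral_radius Ombar_lt1.
have Om1 := unitmx1D_Omega Ombar1.
split=> //; first exact: (affine_fixedP _ _ Om1).2.
by rewrite -(damped_fixed_point zmeas zloc Ombar1); exact: affine_iter_cvg.
Qed.
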